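(* Let $A\in\mathbb{C}^{n\times n}$ and let $H$ be a subspace of $\mathbb{C}^n$ invariant under $A$, with $A_{|_H}$ the restriction of $A$ to $H$. For $\lambda\in\mathbb{C}$ let $\alpha_\lambda(\cdot)$ and $\gamma_\lambda(\cdot)$ denote the algebraic and geometric multiplicities of $\lambda$ as an eigenvalue (taken to be $0$ if $\lambda$ is not an eigenvalue). Then for every $\lambda\in\mathbb{C}$, $$\alpha_\lambda(A)\le \alpha_\lambda(A_{|_H})+n-\dim H,\qquad \gamma_\lambda(A)\le\gamma_\lambda(A_{|_H})+n-\dim H.$$ Further, if $\mu$ is a vector norm on $\mathbb{C}^n$ and $|\lambda|>\mu^0_H(A)$, then $\alpha_\lambda(A)\le n-\dim H$ and $\gamma_\lambda(A)\le n-\dim H$.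
   Context: For a vector norm $\mu$ on $\mathbb{C}^n$ and a subspace $H$ invariant under $A$, the partial norm is $\mu^0_H(A)=\sup_{0\ne x\in H}\mu(Ax)/\mu(x)$. *)

From HB Require Import structures.
From mathcomp Require Import all_boot all_order all_algebra.
From mathcomp Require Import complex.
From mathcomp Require Import boolp classical_sets reals.
Set Implicit Arguments. Unset Strict Implicit. Unset Printing Implicit Defensive.
Import Order.TTheory GRing.Theory Num.Theory.
Local Open Scope ring_scope.

(* Convention: as everywhere in MathComp, a matrix A : 'M_n acts on row
   vectors x : 'rV_n by x |-> x *m A.  A subspace H of C^n is represented by
   a square matrix H : 'M_n whose row space is the subspace; x \in H is
   (x <= H)%MS, dim H = \rank H, and "H invariant under A" is stablemx H A.
   The restriction A_|H is MathComp's [restrictmx H A] (the matrix of the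
   restricted map in the basis [row_base H]). *)

Definition alg_mult (F : fieldType) (m : nat) (A : 'M[F]_m) (l : F) : nat :=
  mup l (char_poly A).

Definition geo_mult (F : fieldType) (m : nat) (A : 'M[F]_m) (l : F) : nat :=
  \rank (eigenspace A l).

Definition is_vnorm (R : rcfType) (n : nat) (mu : 'rV[R[i]]_n -> R) : Prop :=
  [/\ forall x, 0 <= mu x,
      forall x, mu x = 0 -> x = 0,
      forall (a : R[i]) x, mu (a *: x) = ComplexField.Normc.normc a * mu x
    & forall x y, mu (x + y) <= mu x + mu y].

Definition partial_norm (R : realType) (n : nat) (mu : 'rV[R[i]]_n -> R)
    (H A : 'M[R[i]]_n) : R :=
  sup [set r : R | exists x : 'rV[R[i]]_n,
         [/\ (x <= H)%MS, x != 0 & r = mu (x *m A) / mu x]].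

(* In a basis of C^n whose first vectors span H, A is block lower triangular
   with diagonal blocks A_|H and some W of size n - dim H, so
   char A = char A_|H * char W and the multiplicity of l as a root splits, the
   part coming from W being at most deg W.  The eigenspace E of A meets H
   inside the image of the eigenspace of A_|H, and dim E <= dim (E :&: H) +
   n - dim H.  Finally, an eigenvector of A_|H for l is a nonzero x in H with
   mu(xA)/mu(x) = |l|; these ratios are bounded because mu is equivalent to
   the max norm of the real coordinates (compactness of the unit sphere), so
   |l| <= mu^0_H(A).  Hence when |l| > mu^0_H(A), l is not an eigenvalue of
   A_|H and both of its multiplicities for A_|H vanish. *)

From HB Require Import structures.
From mathcomp Require Import all_boot all_order all_algebra.
From mathcomp Require Import complex.
From mathcomp Require Import boolp classical_sets reals.
From mathcomp Require Import topology normedtype derive.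
From mathcomp Require Import ring zify.
Set Implicit Arguments. Unset Strict Implicit. Unset Printing Implicit Defensive.
Import numFieldNormedType.Exports.
Import Order.TTheory GRing.Theory Num.Theory.
Local Open Scope ring_scope.

Section RealSeminorm.
Variables (R : realType) (m : nat) (nu : 'rV[R]_m -> R).
Hypothesis nuD : forall v w, nu (v + w) <= nu v + nu w.
Hypothesis nuZ : forall (t : R) v, nu (t *: v) = `|t| * nu v.

Lemma seminorm0 : nu 0 = 0.
Proof. by rewrite -(scale0r 0) nuZ normr0 mul0r. Qed.

Lemma seminormB v w : nu v - nu w <= nu (v - w).
Proof. by rewrite lerBlDr -{1}(subrK w v) nuD. Qed.

Lemma seminormN v : nu (- v) = nu v.
Proof. by rewrite -scaleN1r nuZ normrN1 mul1r. Qed.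

Lemma seminorm_dist v w : `|nu v - nu w| <= nu (v - w).
Proof.
by rewrite ler_norml seminormB andbT lerNl opprB -[v - w]opprB seminormN seminormB.
Qed.

Lemma seminorm_ge0 v : 0 <= nu v.
Proof. by have := seminorm_dist v 0; rewrite !subr0 seminorm0; apply: le_trans. Qed.

Lemma seminorm_le_norm v : nu v <= (\sum_i nu 'e_i) * `|v|.
Proof.
rewrite {1}(row_sum_delta v) mulr_suml.
elim/big_rec2: _ => [|i y x _ hx]; first by rewrite seminorm0.
apply: le_trans (nuD _ _) (lerD _ hx); rewrite nuZ mulrC ler_wpM2l ?seminorm_ge0 //.
by rewrite [leRHS]/Num.Def.normr /= mx_normrE; apply/bigmax_geP; right; exists (0, i).
Qed.

Lemma seminorm_continuous : continuous nu.
Proof.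
move=> v; set K := \sum_i nu 'e_i.
have K1 : 0 < K + 1 by rewrite ltr_wpDl ?sumr_ge0 // => i _; apply: seminorm_ge0.
apply/(@cvgrPdist_lt _ _ _ _ (nbhs_filter v)) => e e0.
near=> w; apply: le_lt_trans (seminorm_dist _ _) _.
apply: le_lt_trans (seminorm_le_norm _) _.
have : `|v - w| < e / (K + 1).
  near: w; apply: (@cvgr_dist_lt _ _ _ _ (nbhs_filter v) id v) => //.
  by rewrite divr_gt0.
rewrite ltr_pdivlMr // => vwe; apply: le_lt_trans vwe.
by rewrite mulrC ler_wpM2l // lerDl.
Unshelve. all: by end_near.
Qed.

Local Open Scope classical_set_scope.

Hypothesis nu_eq0 : forall v, nu v = 0 -> v = 0.

Lemma norm_le_seminorm : exists2 c, 0 < c & forall v, `|v| <= c * nu v.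
Proof.
have [[w w_neq0]|] := pselect (exists v : 'rV[R]_m, v != 0); last first.
  move=> no_nz; exists 1 => // v; have -> : v = 0.
    by apply: contrapT => /eqP vn; apply: no_nz; exists v.
  by rewrite normr0 mulr_ge0 ?seminorm_ge0.
pose S := [set v : 'rV[R]_m | `|v| = 1].
have S0 : S !=set0.
  by exists (`|w|^-1 *: w); rewrite /S /= normrZ normfV normr_id mulVf ?normr_eq0.
have Sc : compact S.
  apply: bounded_closed_compact.
    rewrite /bounded_near /=; exists 1; split; first exact: real1.
    by move=> M M1 v ->; rewrite ltW.
  have -> : S = Num.Def.normr @^-1` [set 1] by [].
  by move/continuous_closedP : (@norm_continuous _ 'rV[R]_m); apply; exact: closed_eq.
have [u uS umin] := EVT_min_rV S0 Sc (continuous_subspaceT seminorm_continuous).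
have nu_u : 0 < nu u.
  rewrite lt_def seminorm_ge0 andbT; apply/eqP => /nu_eq0 u0.
  by move: uS; rewrite inE /S /= u0 normr0 => /esym/eqP; rewrite oner_eq0.
exists (nu u)^-1; rewrite ?invr_gt0 // => v.
have [->|vn] := eqVneq v 0; first by rewrite normr0 mulr_ge0 ?invr_ge0 ?seminorm_ge0 ?ltW.
have v_gt0 : 0 < `|v| by rewrite normr_gt0.
have /umin : `|v|^-1 *: v \in S.
  by rewrite inE /S /= normrZ normfV normr_id mulVf ?gt_eqF.
by rewrite nuZ normfV normr_id !ler_pdivlMl // mulrC.
Qed.
End RealSeminorm.

Local Notation normc := ComplexField.Normc.normc.

Lemma normc_real (R : rcfType) (t : R) : normc (t%:C)%C = `|t|.
Proof. by rewrite /= expr0n /= addr0 sqrtr_sqr. Qed.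

Section RealCoordinates.
Variables (R : rcfType) (n : nat).
Local Open Scope complex_scope.

Definition of_reim (v : 'rV[R]_(n + n)) : 'rV[R[i]]_n :=
  \row_j ((lsubmx v 0 j)%:C + 'i * (rsubmx v 0 j)%:C).

Definition reim (x : 'rV[R[i]]_n) : 'rV[R]_(n + n) :=
  row_mx (\row_j complex.Re (x 0 j)) (\row_j complex.Im (x 0 j)).

Lemma reimK : cancel reim of_reim.
Proof. by move=> x; apply/rowP => j; rewrite mxE row_mxKl row_mxKr !mxE -complexE. Qed.

Lemma of_reimK : cancel of_reim reim.
Proof.
move=> v; rewrite -[RHS](hsubmxK v); congr row_mx; apply/rowP => j; rewrite !mxE /=.
  by rewrite mul0r mul1r subr0 addr0.
by rewrite !mul0r mul1r !add0r.
Qed.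

Lemma of_reimD v w : of_reim (v + w) = of_reim v + of_reim w.
Proof. by apply/rowP => j; rewrite !mxE !rmorphD /=; ring. Qed.

Lemma of_reimZ (t : R) v : of_reim (t *: v) = t%:C *: of_reim v.
Proof. by apply/rowP => j; rewrite !mxE !rmorphM /=; ring. Qed.

Lemma of_reim0 : of_reim 0 = 0.
Proof. by rewrite -(scale0r (0 : 'rV[R]_(n + n))) of_reimZ scale0r. Qed.
End RealCoordinates.

Section VectorNorm.
Variables (R : realType) (n : nat) (mu : 'rV[R[i]]_n -> R).
Hypothesis mu_vnorm : is_vnorm mu.

Lemma vnorm_ge0 x : 0 <= mu x. Proof. by case: mu_vnorm. Qed.
Lemma vnorm_eq0 x : mu x = 0 -> x = 0. Proof. by case: mu_vnorm => _ h _ _; apply: h. Qed.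
Lemma vnormZ a x : mu (a *: x) = normc a * mu x. Proof. by case: mu_vnorm. Qed.
Lemma vnormD x y : mu (x + y) <= mu x + mu y. Proof. by case: mu_vnorm. Qed.

Lemma vnorm_gt0 x : x != 0 -> 0 < mu x.
Proof.
by move=> x_neq0; rewrite lt_def vnorm_ge0 andbT; apply: contra x_neq0 => /eqP/vnorm_eq0 ->.
Qed.

Lemma vnorm_of_reim_mulmxD (M : 'M_n) v w :
  mu (of_reim (v + w) *m M) <= mu (of_reim v *m M) + mu (of_reim w *m M).
Proof. by rewrite of_reimD mulmxDl vnormD. Qed.

Lemma vnorm_of_reim_mulmxZ (M : 'M_n) (t : R) v :
  mu (of_reim (t *: v) *m M) = `|t| * mu (of_reim v *m M).
Proof. by rewrite of_reimZ -scalemxAl vnormZ normc_real. Qed.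

Lemma vnorm_mulmx_le (A : 'M_n) : exists C, forall x, mu (x *m A) <= C * mu x.
Proof.
have definite v : mu (of_reim v *m 1) = 0 -> v = 0.
  by rewrite mulmx1 => /vnorm_eq0; rewrite -(of_reim0 R n) => /(can_inj (@of_reimK _ _)).
have [c c_gt0 le_c] :=
  norm_le_seminorm (vnorm_of_reim_mulmxD 1) (vnorm_of_reim_mulmxZ 1) definite.
exists ((\sum_i mu (of_reim 'e_i *m A)) * c) => x.
have := seminorm_le_norm (vnorm_of_reim_mulmxD A) (vnorm_of_reim_mulmxZ A) (reim x).
rewrite reimK -mulrA => /le_trans; apply; apply: ler_wpM2l.
  by apply: sumr_ge0 => i _; apply: vnorm_ge0.
by rewrite -{2}(reimK x) -[of_reim _]mulmx1.
Qed.

Local Open Scope classical_set_scope.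

Lemma eigenvalue_le_partial_norm (H A : 'M_n) (x : 'rV_n) l :
  (x <= H)%MS -> x != 0 -> x *m A = l *: x -> normc l <= partial_norm mu H A.
Proof.
move=> xH x_neq0 xA; have [C le_C] := vnorm_mulmx_le A.
apply: ub_le_sup.
  exists C => _ [y [_ y_neq0 ->]]; rewrite ler_pdivrMr ?vnorm_gt0 //; exact: le_C.
by exists x; split => //; rewrite xA vnormZ mulfK // gt_eqF // vnorm_gt0.
Qed.
End VectorNorm.

Section InvariantSubspace.
Variable F : fieldType.

Lemma leq_mup_size (q : {poly F}) x : q != 0 -> (mup x q <= (size q).-1)%N.
Proof.
move=> q_neq0; rewrite mup_leq // prednK ?size_poly_gt0 //.
by apply/negP => /(dvdp_leq q_neq0); rewrite size_exp_XsubC ltnn.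
Qed.

Lemma char_poly_conjumx n (P A : 'M[F]_n) : P \in unitmx ->
  char_poly (conjmx P A) = char_poly A.
Proof.
move=> P_unit; rewrite conjumx // /char_poly /char_poly_mx !map_mxM.
set P' := map_mx polyC P; set Q' := map_mx polyC (invmx P).
have PQ : P' *m Q' = 1%:M by rewrite -map_mxM mulmxV // map_mx1.
have -> : 'X%:M - P' *m map_mx polyC A *m Q' = P' *m ('X%:M - map_mx polyC A) *m Q'.
  by rewrite mulmxBr mulmxBl scalar_mxC -(mulmxA 'X%:M) PQ mulmx1.
by rewrite !det_mulmx mulrAC -det_mulmx PQ det1 mul1r.
Qed.

Lemma char_poly_lblock r s (X : 'M[F]_r) (Z : 'M[F]_(s, r)) (W : 'M[F]_s) :
  char_poly (block_mx X 0 Z W) = char_poly X * char_poly W.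
Proof.
rewrite /char_poly /char_poly_mx map_block_mx /= map_mx0 scalar_mx_block.
by rewrite opp_block_mx add_block_mx oppr0 addr0 det_lblock.
Qed.

Lemma char_poly_stable_pid n r (A : 'M[F]_n) : (r <= n)%N ->
  stablemx (pid_mx r : 'M_(r, n)) A ->
  exists W : 'M_(n - r),
    char_poly A = char_poly (conjmx (pid_mx r : 'M_(r, n)) A) * char_poly W.
Proof.
move=> le_rn; move: (n - r)%N (subnKC le_rn) => s def_n; clear le_rn.
case: n / def_n in A *.
rewrite pid_mx_row -[A]submxK; set X := ulsubmx A; set Y := ursubmx A.
set Z := dlsubmx A; set W := drsubmx A => A_stable.
have VA : row_mx 1%:M 0 *m block_mx X Y Z W = row_mx X Y.
  by rewrite mul_row_block !mul1mx !mul0mx !addr0.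
have Y0 : Y = 0.
  move: A_stable; rewrite VA => /submxP [D].
  by rewrite mul_mx_row mulmx1 mulmx0 => /eq_row_mx [].
rewrite Y0 in A_stable VA *.
have free_V : row_free (row_mx (1%:M : 'M[F]_r) (0 : 'M_(r, s))).
  by rewrite -pid_mx_row /row_free rank_pid_mx ?leq_addr.
have -> : conjmx (row_mx 1%:M 0) (block_mx X 0 Z W) = X.
  apply: (row_free_inj free_V).
  by rewrite mulmxKpV // VA mul_mx_row mulmx1 mulmx0.
by exists W; rewrite char_poly_lblock.
Qed.

Section Restriction.
Variables (n : nat) (A H : 'M[F]_n).
Hypothesis A_stable : stablemx H A.

Lemma char_poly_restrictmx : exists W : 'M_(n - \rank H),
  char_poly A = char_poly (restrictmx H A) * char_poly W.
Proof.
set P := row_ebase H; have P_unit : P \in unitmx := row_ebase_unit H.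
have base_pid : row_base H = pid_mx (\rank H) *m P by [].
have pid_stable : stablemx (pid_mx (\rank H) : 'M[F]_(\rank H, n)) (conjmx P A).
  move: A_stable; rewrite -stablemx_row_base base_pid => /(submxMr (invmx P)).
  by rewrite mulmxK // conjumx // !mulmxA.
have [W defA] := char_poly_stable_pid (rank_leq_col H) pid_stable.
have pid_free : row_free (pid_mx (\rank H) : 'M[F]_(\rank H, n)).
  by rewrite /row_free rank_pid_mx ?rank_leq_col.
by exists W; rewrite base_pid conjMumx // -defA char_poly_conjumx.
Qed.

Lemma mup_char_poly_restrictmx l :
  (mup l (char_poly A) <= mup l (char_poly (restrictmx H A)) + (n - \rank H))%N.
Proof.
have [W ->] := char_poly_restrictmx.
rewrite mupM ?monic_neq0 ?char_poly_monic // leq_add2l.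
by have := leq_mup_size l (monic_neq0 (char_poly_monic W)); rewrite size_char_poly.
Qed.

Lemma sub_eigenspace_restrictmx m l (Y : 'M_(m, \rank H)) :
  (Y <= eigenspace (restrictmx H A) l)%MS = (Y *m row_base H <= eigenspace A l)%MS.
Proof. by rewrite sub_eigenspace_conjmx ?stablemx_row_base ?row_base_free. Qed.

Lemma mxrank_eigenspace_restrictmx l :
  (\rank (eigenspace A l) <= \rank (eigenspace (restrictmx H A) l) + (n - \rank H))%N.
Proof.
set E := eigenspace A l.
have EH_B : ((E :&: H)%MS <= row_base H)%MS by rewrite eq_row_base capmxSr.
have EH_restrict : (\rank (E :&: H) <= \rank (eigenspace (restrictmx H A) l))%N.
  rewrite -(mulmxKpV EH_B); apply: leq_trans (mxrankM_maxl _ _) (mxrankS _).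
  by rewrite sub_eigenspace_restrictmx mulmxKpV // capmxSl.
have := mxrank_sum_cap E H; have := rank_leq_col (E + H)%MS; lia.
Qed.

Lemma restrictmx_eigenvector l : eigenvalue (restrictmx H A) l ->
  exists x : 'rV_n, [/\ (x <= H)%MS, x != 0 & x *m A = l *: x].
Proof.
move=> /eigenvalueP [y /eigenspaceP].
rewrite sub_eigenspace_restrictmx => /eigenspaceP yA y_neq0.
exists (y *m row_base H); split => //; first by rewrite -(eq_row_base H) submxMl.
by rewrite mulmx_free_eq0 ?row_base_free.
Qed.
End Restriction.
End InvariantSubspace.

Theorem theorem5p1 (R : realType) (n : nat) (A H : 'M[R[i]]_n) :
  stablemx H A ->
  forall l : R[i],
    [/\ (alg_mult A l <= alg_mult (restrictmx H A) l + (n - \rank H))%N,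
        (geo_mult A l <= geo_mult (restrictmx H A) l + (n - \rank H))%N
      & forall mu : 'rV[R[i]]_n -> R, is_vnorm mu ->
          partial_norm mu H A < ComplexField.Normc.normc l ->
          (alg_mult A l <= n - \rank H)%N /\ (geo_mult A l <= n - \rank H)%N].
Proof.
move=> A_stable l.
have alg_le := mup_char_poly_restrictmx A_stable l.
have geo_le := mxrank_eigenspace_restrictmx A_stable l.
split => // mu mu_vnorm lt_l.
have not_eig : ~~ eigenvalue (restrictmx H A) l.
  apply/negP => /(restrictmx_eigenvector A_stable) [x [xH x_neq0 xA]].
  by have := eigenvalue_le_partial_norm mu_vnorm xH x_neq0 xA; rewrite leNgt lt_l.
have mup0 : mup l (char_poly (restrictmx H A)) = 0%N.
  by rewrite mupNroot // -eigenvalue_root_char.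
have eig0 : eigenspace (restrictmx H A) l = 0 by apply/eqP/negPn.
by move: alg_le geo_le; rewrite /alg_mult /geo_mult mup0 eig0 mxrank0.
Qed.
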